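(* Let $D$ be a filter on a set $I$, let $N$ be a model, $\lambda=\|N\|+|\tau_N|$, and let $\Delta$ be the set of atomic formulas of $\mathbb L(\tau_N)$. Let $\mathscr T=({}^{\omega>}\lambda,\trianglelefteq)^I/D$ be the reduced power of the tree of finite sequences of ordinals $<\lambda$ ordered by initial segment, and let $\kappa=\min\{\mathfrak t_{\mathscr T},\mathfrak p_{\mathscr T}\}$. Then the reduced power $N^I/D$ is $(\kappa,1,\Delta)$-saturated: every set of fewer than $\kappa$ formulas $\varphi(x,\bar a)$, with $\varphi(x,\bar y)$ atomic and $\bar a$ from $N^I/D$, which is finitely satisfiable in $N^I/D$, is realized in $N^I/D$.
   Context: In the reduced power, $f/D\trianglelefteq g/D$ iff $\{i\in I: f(i)\trianglelefteq g(i)\}\in D$; atomic formulas are evaluated in $N^I/D$ in the same way (an atomic formula holds iff the set of coordinates where it holds is in $D$). For a partial order $\mathscr T$: $\mathfrak t_{\mathscr T}$ is the least infinite cardinal $\kappa$ such that there is a strictly increasing sequence of length $\kappa$ with no upper bound; a $(\kappa_1,\kappa_2)$-pre-cut is a pair $(C_1,C_2)$ of subsets with $C_1\cup C_2$ linearly ordered, every element of $C_1$ below every element of $C_2$, no element $c$ lying above all of $C_1$ and below all of $C_2$, $\mathrm{cf}(C_1)=\kappa_1$ and the cofinality of $C_2$ under the reversed order equal to $\kappa_2$; $\mathfrak p_{\mathscr T}=\min\{\kappa_1+\kappa_2:\kappa_1,\kappa_2\ge\aleph_0,\ \mathscr T$ has a $(\kappa_1,\kappa_2)$-pre-cut$\}$.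 *)

From mathcomp Require Import ssreflect ssrfun ssrbool eqtype ssrnat seq fintype.
From Stdlib Require List.

Set Implicit Arguments.
Unset Strict Implicit.
Unset Printing Implicit Defensive.

Definition card_le (A B : Type) : Prop := exists f : A -> B, injective f.
Definition card_eq (A B : Type) : Prop := exists f : A -> B, bijective f.
Definition infinite_type (A : Type) : Prop := card_le nat A.

(* A cardinal (von Neumann style): an initial well-order (W, ltW), i.e. a
   strict total well-order each of whose proper initial segments has strictly
   smaller cardinality than W. *)
Definition is_cardinal (W : Type) (ltW : W -> W -> Prop) : Prop :=
  [/\ (forall a, ~ ltW a a),
      (forall a b c, ltW a b -> ltW b c -> ltW a c),
      (forall a b, ltW a b \/ a = b \/ ltW b a),
      well_founded ltW &
      (forall w, ~ card_le W {v : W | ltW v w})].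

Section Orders.
Variables (T : Type) (le : T -> T -> Prop).

Definition slt (x y : T) : Prop := le x y /\ x <> y.

Definition unbounded_incr_seq (W : Type) (ltW : W -> W -> Prop) : Prop :=
  exists s : W -> T,
    (forall a b, ltW a b -> slt (s a) (s b)) /\
    ~ (exists u, forall a, le (s a) u).

Definition cofinal_in (C Dd : T -> Prop) : Prop :=
  (forall x, Dd x -> C x) /\ (forall x, C x -> exists2 y, Dd y & le x y).

Definition cf_is (C : T -> Prop) (W : Type) : Prop :=
  (exists Dd, cofinal_in C Dd /\ card_eq {x : T | Dd x} W) /\
  (forall Dd, cofinal_in C Dd -> card_le W {x : T | Dd x}).

End Orders.

Definition has_precut (T : Type) (le : T -> T -> Prop) (W1 W2 : Type) : Prop :=
  exists C1 C2 : T -> Prop,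
    [/\ (forall x y, (C1 x \/ C2 x) -> (C1 y \/ C2 y) -> le x y \/ le y x),
        (forall x y, C1 x -> C2 y -> slt le x y),
        ~ (exists c, (forall x, C1 x -> slt le x c) /\ (forall y, C2 y -> slt le c y)),
        cf_is le C1 W1 &
        cf_is (fun x y => le y x) C2 W2].

(* |J| < t_T : no infinite cardinal mu <= |J| carries an unbounded strictly
   increasing sequence of length mu (t_T = least such mu, or "infinity"). *)
Definition card_below_t (T : Type) (le : T -> T -> Prop) (J : Type) : Prop :=
  forall (W : Type) (ltW : W -> W -> Prop),
    is_cardinal ltW -> infinite_type W -> card_le W J ->
    ~ unbounded_incr_seq le ltW.

(* |J| < p_T : no (kappa1,kappa2)-pre-cut with kappa1,kappa2 infinite and
   kappa1 + kappa2 <= |J|. *)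
Definition card_below_p (T : Type) (le : T -> T -> Prop) (J : Type) : Prop :=
  forall (W1 : Type) (lt1 : W1 -> W1 -> Prop) (W2 : Type) (lt2 : W2 -> W2 -> Prop),
    is_cardinal lt1 -> is_cardinal lt2 -> infinite_type W1 -> infinite_type W2 ->
    card_le (W1 + W2)%type J -> ~ has_precut le W1 W2.

Definition card_below_min_tp (T : Type) (le : T -> T -> Prop) (J : Type) : Prop :=
  card_below_t le J /\ card_below_p le J.

Definition is_filter (I : Type) (D : (I -> Prop) -> Prop) : Prop :=
  [/\ D (fun _ => True),
      (forall A B : I -> Prop, (forall i, A i -> B i) -> D A -> D B) &
      (forall A B : I -> Prop, D A -> D B -> D (fun i => A i /\ B i))].

Definition init_seg (L : Type) (s t : list L) : Prop := exists u, t = s ++ u.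

Section ReducedTree.
Variables (I : Type) (D : (I -> Prop) -> Prop) (L : Type).

Definition Deq (f g : I -> list L) : Prop := D (fun i => f i = g i).
Definition Dle (f g : I -> list L) : Prop := D (fun i => init_seg (f i) (g i)).

(* elements of ( ^{omega>}L )^I / D : the D-equivalence classes *)
Definition redtree : Type :=
  {P : (I -> list L) -> Prop | exists f, P = Deq f}.

Definition redtree_le (P Q : redtree) : Prop :=
  exists f g, sval P = Deq f /\ sval Q = Deq g /\ Dle f g.

End ReducedTree.

Record vocab := Vocab {
  fun_sym : Type; rel_sym : Type;
  farity : fun_sym -> nat; rarity : rel_sym -> nat }.

Record model (tau : vocab) := Model {
  carrier :> Type;
  finterp : forall f : fun_sym tau, ('I_(farity f) -> carrier) -> carrier;
  rinterp : forall r : rel_sym tau, ('I_(rarity r) -> carrier) -> Prop }.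

Inductive term (tau : vocab) : Type :=
  | tvar : nat -> term tau
  | tapp : forall f : fun_sym tau, ('I_(farity f) -> term tau) -> term tau.

Inductive atomic (tau : vocab) : Type :=
  | aeq : term tau -> term tau -> atomic tau
  | arel : forall r : rel_sym tau, ('I_(rarity r) -> term tau) -> atomic tau.

Fixpoint teval (tau : vocab) (N : model tau) (v : nat -> N) (t : term tau) : N :=
  match t with
  | tvar n => v n
  | tapp f a => finterp (fun i => teval v (a i))
  end.

Definition aholds (tau : vocab) (N : model tau) (v : nat -> N) (phi : atomic tau) : Prop :=
  match phi with
  | aeq t1 t2 => teval v t1 = teval v t2
  | arel r a => rinterp (fun i => teval v (a i))
  end.

(* A formula phi(x, a) with parameters from N^I/D: phi atomic, variable 0 is
   x and variable k+1 is assigned the parameter (a k) : I -> N (a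
   representative of an element of N^I/D). *)
Definition pformula (tau : vocab) (N : model tau) (I : Type) : Type :=
  (atomic tau * (nat -> I -> N))%type.

Definition realizes (tau : vocab) (N : model tau) (I : Type)
    (D : (I -> Prop) -> Prop) (x : I -> N) (p : pformula N I) : Prop :=
  D (fun i => aholds (fun k => match k with 0 => x i | k'.+1 => p.2 k' i end) p.1).

(* Code each formula at each coordinate by a block of [k] letters of [L], so
   that a node of the tree [^{omega>}L] reads as a finite list of conditions.
   Along a well-order of the formulas build an increasing chain in the reduced
   power that stays admissible (every finite set of formulas is consistent mod
   [D] with the conditions of the current node), appending the code of each
   formula wherever this keeps it consistent.  At a limit the chain has fewer
   than [t] elements, hence an upper bound; admissibility is then restored by
   a second recursion over the finite sets of formulas, truncating to the
   longest consistent prefix, whose limits are pre-cuts of length below [p]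
   and so are filled.  The final node forces every formula mod [D], and a
   solution of its conditions at each coordinate realizes them all. *)

From mathcomp Require Import ssreflect ssrfun ssrbool eqtype ssrnat seq fintype.
From Stdlib Require List.
From mathcomp Require Import choice div.
From mathcomp Require Import boolp.
From mathcomp Require classical_sets wochoice.
From Stdlib Require Import Wellfounded.

Set Implicit Arguments.
Unset Strict Implicit.
Unset Printing Implicit Defensive.

(** * Cardinal arithmetic *)

Lemma sval_inj (T : Type) (P : T -> Prop) : injective (@sval T P).
Proof. by move=> [x px] [y py] /= exy; exact: eq_exist. Qed.

Lemma card_le_refl A : card_le A A.
Proof. by exists id. Qed.

Lemma card_le_trans A B C : card_le A B -> card_le B C -> card_le A C.
Proof. by move=> [f fi] [g gi]; exists (g \o f) => x y /gi /fi. Qed.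

Lemma card_eq_le A B : card_eq A B -> card_le A B.
Proof. by move=> [f /bij_inj]; exists f. Qed.

Lemma card_eq_sym A B : card_eq A B -> card_eq B A.
Proof. by move=> [f [g fg gf]]; exists g; exists f. Qed.

Lemma card_le_sig (T : Type) (P : T -> Prop) : card_le {x | P x} T.
Proof. by exists sval; apply: sval_inj. Qed.

Lemma card_le_sub (T : Type) (P Q : T -> Prop) :
  (forall x, P x -> Q x) -> card_le {x | P x} {x | Q x}.
Proof.
move=> PQ; exists (fun x : {x | P x} => exist Q (sval x) (PQ _ (svalP x))).
by move=> x y /(congr1 sval) /= /sval_inj.
Qed.

Lemma Zorn_prop (T : Type) (R : T -> T -> Prop) :
  (forall t, R t t) -> (forall r s t, R r s -> R s t -> R r t) ->
  (forall s t, R s t -> R t s -> s = t) ->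
  (forall A : T -> Prop, (forall s t, A s -> A t -> R s t \/ R t s) ->
     exists t, forall s, A s -> R s t) ->
  exists t, forall s, R t s -> s = t.
Proof.
move=> Rr Rt Ra Rc.
have [t tmax] : exists t, forall s, `[< R t s >] -> s = t.
  apply: classical_sets.Zorn.
  - by move=> t; apply/asboolP.
  - by move=> r s t /asboolP rs /asboolP st; apply/asboolP; apply: Rt rs st.
  - by move=> s t /asboolP st /asboolP ts; apply: Ra.
  move=> A Atot; have [t ubt] : exists t, forall s, A s -> R s t.
    by apply: Rc => s t As At; case: (Atot s t As At) => /asboolP; [left|right].
  by exists t => s /ubt /asboolP.
by exists t => s /asboolP /tmax.
Qed.

Section CardTotal.
Variables A B : Type.

Definition partial_inj (R : A -> B -> Prop) :=
  (forall a b b', R a b -> R a b' -> b = b') /\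
  (forall a a' b, R a b -> R a' b -> a = a').

Lemma maximal_partial_inj : exists2 R, partial_inj R &
  forall R', partial_inj R' -> (forall a b, R a b -> R' a b) -> forall a b, R' a b -> R a b.
Proof.
pose R0 (x y : {R | partial_inj R}) := forall a b, sval x a b -> sval y a b.
have [[R Rinj] Rmax] : exists t, forall s, R0 t s -> s = t.
  apply: Zorn_prop => [t //|r s t rs st a b /rs /st //|s t st ts|C Ctot].
    apply: sval_inj; apply/funext => a; apply/funext => b.
    by apply/propext; split; [apply: st|apply: ts].
  pose U a b := exists2 x, C x & sval x a b.
  have Uinj : partial_inj U.
    split=> [a b b'|a a' b] [x Cx xab] [y Cy yab].
      by case: (Ctot x y Cx Cy) => [xy|yx];
        [apply: (proj1 (svalP y)) (xy _ _ xab) yab|apply: (proj1 (svalP x)) xab (yx _ _ yab)].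
    by case: (Ctot x y Cx Cy) => [xy|yx];
      [apply: (proj2 (svalP y)) (xy _ _ xab) yab|apply: (proj2 (svalP x)) xab (yx _ _ yab)].
  by exists (exist _ U Uinj) => s Cs a b sab; exists s.
exists R => // R' R'inj RR' a b.
by rewrite -[R]/(sval (exist _ R Rinj)) -(Rmax (exist _ R' R'inj) RR').
Qed.

Lemma card_le_total : card_le A B \/ card_le B A.
Proof.
have [R [Rfun Rinj] Rmax] := maximal_partial_inj.
case: (EM (forall a, exists b, R a b)) => [Rtot|/existsNP [a0 Ra0]].
  left; exists (fun a => sval (cid (Rtot a))) => a a'.
  case: (cid (Rtot a)) (cid (Rtot a')) => b ab [b' ab'] /= bb'.
  by subst b'; apply: Rinj ab ab'.
case: (EM (forall b, exists a, R a b)) => [Rtot|/existsNP [b0 Rb0]].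
  right; exists (fun b => sval (cid (Rtot b))) => b b'.
  case: (cid (Rtot b)) (cid (Rtot b')) => a ab [a' a'b] /= aa'.
  by subst a'; apply: Rfun ab a'b.
pose R' a b := R a b \/ (a = a0 /\ b = b0).
have R'inj : partial_inj R'.
  split=> [a b b'|a a' b].
    move=> [ab|[-> ->]] [ab'|[e ->]] //; first exact: Rfun ab ab'.
      by subst a; case: Ra0; exists b.
    by case: Ra0; exists b'.
  move=> [ab|[-> ->]] [a'b|[-> e]] //; first exact: Rinj ab a'b.
    by subst b; case: Rb0; exists a.
  by case: Rb0; exists a'.
by case: Ra0; exists b0; apply: (Rmax R' R'inj) => [a b ab|]; [left|right].
Qed.

End CardTotal.

Lemma Forall_seq_map (X Y : Type) (f : X -> Y) (P : X -> Prop) (Q : Y -> Prop) l :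
  (forall x, P x -> Q (f x)) -> List.Forall P l -> List.Forall Q (map f l).
Proof. by move=> PQ; elim=> //= x {}l Px _ IH; constructor; [apply: PQ|]. Qed.

Lemma map_inj_Forall (X Y : Type) (f : X -> Y) (P : X -> Prop) (l l' : list X) :
  (forall x y, P x -> P y -> f x = f y -> x = y) ->
  List.Forall P l -> List.Forall P l' -> map f l = map f l' -> l = l'.
Proof.
move=> finj Pl; elim: Pl l' => [|x {}l Px _ IH] [|y l'] //= /List.Forall_cons_iff [Py Pl'].
by case=> /(finj _ _ Px Py) -> /(IH _ Pl') ->.
Qed.

Section ListCoding.
Variable A : Type.
Implicit Types (B : A -> Prop) (l : list A).

Definition list_coding B (F : list A -> A -> Prop) :=
  [/\ forall l, List.Forall B l -> exists a, F l a,
      forall l a, F l a -> List.Forall B l /\ B a,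
      forall l a a', F l a -> F l a' -> a = a' &
      forall l l' a, F l a -> F l' a -> l = l'].

Definition coding_on B (c : list A -> A) :=
  (forall l, List.Forall B l -> B (c l)) /\
  (forall l l', List.Forall B l -> List.Forall B l' -> c l = c l' -> l = l').

Lemma list_coding_fun B F : list_coding B F ->
  exists2 c, coding_on B c & forall l, List.Forall B l -> F l (c l).
Proof.
case=> Ftot Fran Ffun Finj.
have [a1 _] := Ftot _ (List.Forall_nil B).
pose c l := if pselect (exists a, F l a) is left h then sval (cid h) else a1.
have cF l : List.Forall B l -> F l (c l).
  by move=> /Ftot h; rewrite /c; case: pselect => [h'|//]; case: (cid h').
exists c => //; split=> [l /cF /Fran []//|l l' /cF Fl /cF Fl' cl].
by rewrite cl in Fl; apply: Finj Fl Fl'.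
Qed.

(* Elements of [B] are coded by [[:: x]], the others by [[:: g x; g x]]. *)
Lemma coding_on_enlarge B B' (c : list A -> A) (g : A -> A) :
  coding_on B c ->
  (forall x, B' x -> ~ B x -> B (g x)) ->
  (forall x y, B' x -> ~ B x -> B' y -> ~ B y -> g x = g y -> x = y) ->
  exists2 h, (forall l, List.Forall B' l -> B (h l)) &
    forall l l', List.Forall B' l -> List.Forall B' l' -> h l = h l' -> l = l'.
Proof.
move=> [cB cinj] gB ginj.
pose sg x := if pselect (B x) then [:: x] else [:: g x; g x].
have sgB x : B' x -> List.Forall B (sg x).
  by rewrite /sg; case: pselect => [Bx|nBx] B'x; repeat constructor => //; apply: gB.
have sginj x y : B' x -> B' y -> sg x = sg y -> x = y.
  rewrite /sg; case: pselect => [Bx|nBx]; case: pselect => [By|nBy] //= B'x B'y; first by case.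
  by case=> /(ginj _ _ B'x nBx B'y nBy).
have csg x : B' x -> B (c (sg x)) by move/sgB/cB.
have csginj x y : B' x -> B' y -> c (sg x) = c (sg y) -> x = y.
  by move=> B'x B'y /(cinj _ _ (sgB _ B'x) (sgB _ B'y)); apply: sginj.
exists (fun l => c (map (c \o sg) l)) => [l|l l' B'l B'l'].
  by move=> B'l; apply/cB/(Forall_seq_map csg).
move/(cinj _ _ (Forall_seq_map csg B'l) (Forall_seq_map csg B'l')).
exact: map_inj_Forall csginj B'l B'l'.
Qed.

Lemma list_coding_grow B F : list_coding B F -> card_le {x | B x} {x | ~ B x} ->
  exists B' F', [/\ list_coding B' F', (forall a, B a -> B' a),
    (forall l a, F l a -> F' l a) & exists a, B' a /\ ~ B a].
Proof.
move=> codF [e einj]; case: (codF) => Ftot Fran Ffun Finj.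
have [c cc cF] := list_coding_fun codF; have [cB _] := cc.
pose e' x := if pselect (B x) is left Bx then sval (e (exist _ x Bx)) else x.
have e'B x : B x -> ~ B (e' x).
  by rewrite /e'; case: pselect => // Bx _; exact: (svalP (e _)).
have e'inj x y : B x -> B y -> e' x = e' y -> x = y.
  rewrite /e'; case: pselect => // Bx; case: pselect => // By _ _.
  by move=> /sval_inj /einj /(congr1 sval).
pose B' a := B a \/ exists2 b, B b & a = e' b.
pose g a := if pselect (exists2 b, B b & a = e' b) is left h then sval (cid2 h) else a.
have gE b : B b -> g (e' b) = b.
  move=> Bb; rewrite /g; case: pselect => [h|[]]; last by exists b.
  by case: (cid2 h) => b' /= Bb' ebb'; apply: e'inj Bb' Bb (esym ebb').
have [h hB hinj] : exists2 h, (forall l, List.Forall B' l -> B (h l)) &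
    forall l l', List.Forall B' l -> List.Forall B' l' -> h l = h l' -> l = l'.
  apply: (coding_on_enlarge (g := g) cc).
    by move=> x [Bx /(_ Bx)//|[b Bb ->] _]; rewrite gE.
  move=> x y [Bx /(_ Bx)//|[b Bb ->] _] [By /(_ By)//|[b' Bb' ->] _].
  by rewrite !gE // => ->.
pose F' l a := F l a \/ [/\ List.Forall B' l, ~ List.Forall B l & a = e' (h l)].
have c0 : B (c [::]) by apply: cB.
exists B', F'; split=> [|a|l a|]; [|by left|by left|]; last first.
  by exists (e' (c [::])); split; [right; exists (c [::])|apply: e'B].
split=> [l B'l|l a|l a a'|l l' a].
- case: (EM (List.Forall B l)) => [/Ftot [a]|nBl]; first by exists a; left.
  by exists (e' (h l)); right.
- case=> [/Fran [Bl Ba]|[B'l _ ->]]; last by split=> //; right; exists (h l) => //; apply: hB.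
  by split; [apply: List.Forall_impl Bl => x; left|left].
- case=> [Fa|[_ nBl ->]] [Fa'|[_ nBl' ->]] //; first exact: Ffun Fa Fa'.
    by case: nBl'; case: (Fran _ _ Fa).
  by case: nBl; case: (Fran _ _ Fa').
case=> [Fa|[B'l nBl ->]] [Fa'|[B'l' nBl' ee']].
- exact: Finj Fa Fa'.
- by case: (Fran _ _ Fa) => _; rewrite ee' => /(e'B _ (hB _ B'l')).
- by case: (Fran _ _ Fa') => _ /(e'B _ (hB _ B'l)).
- by apply: hinj => //; apply: e'inj ee'; apply: hB.
Qed.

Lemma list_coding_chain (X : Type) (C : X -> Prop)
    (BX : X -> A -> Prop) (FX : X -> list A -> A -> Prop) :
  (forall p, C p -> list_coding (BX p) (FX p)) -> (exists p, C p) ->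
  (forall p q, C p -> C q ->
     ((forall a, BX p a -> BX q a) /\ forall l a, FX p l a -> FX q l a) \/
     ((forall a, BX q a -> BX p a) /\ forall l a, FX q l a -> FX p l a)) ->
  list_coding (fun a => exists2 p, C p & BX p a) (fun l a => exists2 p, C p & FX p l a).
Proof.
move=> Ccod [p0 Cp0] Ctot.
have inC l : List.Forall (fun a => exists2 p, C p & BX p a) l ->
    exists2 p, C p & List.Forall (BX p) l.
  elim=> [|a {}l [p Cp pa] _ [q Cq ql]]; first by exists p0.
  case: (Ctot p q Cp Cq) => [[pq _]|[qp _]].
    by exists q => //; constructor; [apply: pq|].
  by exists p => //; constructor; last apply: List.Forall_impl ql.
split=> [l /inC [p Cp]|l a [p Cp pa]|l a a'|l l' a].
- by case: (Ccod _ Cp) => + _ _ _ => /[apply] [[a pa]]; exists a, p.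
- case: (Ccod _ Cp) => _ /(_ l a pa) [pl pa'] _ _.
  by split; [apply: List.Forall_impl pl => x px; exists p|exists p].
- move=> [p Cp pa] [q Cq qa']; case: (Ctot p q Cp Cq) => [[_ pq]|[_ qp]].
    by case: (Ccod _ Cq) => _ _ fn _; apply: fn (pq _ _ pa) qa'.
  by case: (Ccod _ Cp) => _ _ fn _; apply: fn pa (qp _ _ qa').
move=> [p Cp pa] [q Cq qa]; case: (Ctot p q Cp Cq) => [[_ pq]|[_ qp]].
  by case: (Ccod _ Cq) => _ _ _ inj; apply: inj (pq _ _ pa) qa.
by case: (Ccod _ Cp) => _ _ _ inj; apply: inj pa (qp _ _ qa).
Qed.

Lemma list_coding_nat (iota : nat -> A) : injective iota ->
  exists B F, list_coding B F.
Proof.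
move=> iota_inj; pose B a := exists n, a = iota n.
pose inv a := if pselect (B a) is left h then sval (cid h) else 0.
have invK a : B a -> iota (inv a) = a.
  by move=> Ba; rewrite /inv; case: pselect => // h; case: (cid h).
exists B, (fun l a => List.Forall B l /\ a = iota (pickle (map inv l))).
split=> [l Bl|l a [Bl ->]|l a a' [_ ->] [_ ->] //|l l' a [Bl ->] [Bl']].
- by eexists.
- by split=> //; eexists.
move/iota_inj/(pcan_inj pickleK); apply: map_inj_Forall Bl Bl'.
by move=> x y Bx By /(congr1 iota); rewrite !invK.
Qed.

(* Zorn gives a maximal coding of [list B] into [B]; a set [B] embedding into
   its complement could be enlarged, so the complement embeds into [B]. *)
Lemma card_le_list_self : card_le nat A -> card_le (list A) A.
Proof.
move=> [iota iota_inj].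
pose T := {p : (A -> Prop) * (list A -> A -> Prop) | list_coding p.1 p.2}.
pose R (x y : T) := (forall a, (sval x).1 a -> (sval y).1 a) /\
                    (forall l a, (sval x).2 l a -> (sval y).2 l a).
have [[[B F] codF] Fmax] : exists t, forall s, R t s -> s = t.
  apply: Zorn_prop => [t|r s t [rs1 rs2] [st1 st2]|s t [st1 st2] [ts1 ts2]|C Ctot].
  - by split.
  - by split=> [a /rs1/st1|l a /rs2/st2].
  - apply: sval_inj; case: (sval s) (sval t) st1 st2 ts1 ts2 => [B F] [B' F'] /= BB' FF' B'B F'F.
    congr pair; first by apply/funext => a; apply/propext; split; [apply: BB'|apply: B'B].
    by apply/funext => l; apply/funext => a; apply/propext; split; [apply: FF'|apply: F'F].
  case: (EM (exists t, C t)) => [[t0 Ct0]|noC]; last first.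
    have [B [F codF]] := list_coding_nat iota_inj.
    by exists (exist _ (B, F) codF) => s Cs; case: noC; exists s.
  have codU := @list_coding_chain T C (fun t => (sval t).1) (fun t => (sval t).2)
    (fun t _ => svalP t) (ex_intro _ t0 Ct0) Ctot.
  by exists (exist _ (_, _) codU) => s Cs; split=> [a|l a] ? /=; exists s.
have [c cc cF] := list_coding_fun codF.
case: (card_le_total {x | B x} {x | ~ B x}) => [Bsmall|[e einj]].
  have [B' [F' [codF' BB' FF' [a [B'a nBa]]]]] := list_coding_grow codF Bsmall.
  move: (Fmax (exist _ (B', F') codF') (conj BB' FF')).
  by move=> /(congr1 (fun t => (sval t).1 a)) /= eB; rewrite eB in B'a.
pose g x := if pselect (~ B x) is left h then sval (e (exist _ x h)) else x.
have gB x : True -> ~ B x -> B (g x).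
  by move=> _ nBx; rewrite /g; case: pselect => // nBx'; exact: (svalP (e _)).
have ginj x y : True -> ~ B x -> True -> ~ B y -> g x = g y -> x = y.
  move=> _ nBx _ nBy; rewrite /g; case: pselect => // nBx'; case: pselect => // nBy'.
  by move=> /sval_inj /einj /(congr1 sval).
have [h _ hinj] := coding_on_enlarge cc gB ginj.
by exists h => l l'; apply: hinj; apply/List.Forall_forall.
Qed.

End ListCoding.

Lemma card_le_list X A : card_le nat A -> card_le X A -> card_le (list X) A.
Proof.
move=> /card_le_list_self listA [f finj]; apply: card_le_trans listA.
by exists (map f); apply: inj_map.
Qed.

Lemma card_le_sum X Y A : card_le nat A -> card_le X A -> card_le Y A -> card_le (X + Y) A.
Proof.
move=> /card_le_list_self listA [f finj] [g ginj]; apply: card_le_trans listA.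
exists (fun z => match z with inl x => [:: f x] | inr y => [:: g y; g y] end).
by move=> [x|y] [x'|y'] //= [] => [/finj ->|/ginj ->].
Qed.

Lemma finite_or_infinite A : (exists l : list A, forall x, List.In x l) \/ card_le nat A.
Proof.
case: (EM (exists l : list A, forall x, List.In x l)) => [|nfin]; [by left|right].
have fresh (l : list A) : exists x, ~ List.In x l.
  by apply/existsNP => all_in; apply: nfin; exists l => x; apply: contrapT.
pose g l := sval (cid (fresh l)).
pose fix firsts n := if n is n'.+1 then g (firsts n') :: firsts n' else [::].
have in_firsts m n : m < n -> List.In (g (firsts m)) (firsts n).
  elim: n => // n IH; rewrite ltnS leq_eqVlt => /orP [/eqP ->|/IH]; by [left|right].
exists (fun n => g (firsts n)) => m n gmn.
have notin k : ~ List.In (g (firsts k)) (firsts k) by rewrite /g; case: (cid _).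
case: (ltngtP m n) => // [/in_firsts|/in_firsts].
  by rewrite gmn => /notin.
by rewrite -gmn => /notin.
Qed.

Lemma nat_inj_of_nomax (K : Type) (lt : K -> K -> Prop) (M : K -> Prop) :
  (forall a, ~ lt a a) -> (forall a b c, lt a b -> lt b c -> lt a c) ->
  (exists m, M m) -> (forall m, M m -> exists m', M m' /\ lt m m') ->
  card_le nat {m | M m}.
Proof.
move=> irr tr [m0 M0] nomax.
pose next (u : {m | M m}) : {m | M m} :=
  let p := cid (nomax _ (svalP u)) in exist _ (sval p) (proj1 (svalP p)).
have lt_next u : lt (sval u) (sval (next u)) by rewrite /next; case: (cid _) => p [].
pose chain n := iter n next (exist _ m0 M0).
have chain_lt m n : m < n -> lt (sval (chain m)) (sval (chain n)).
  elim: n => // n IH; rewrite ltnS leq_eqVlt => /orP [/eqP ->|/IH h]; first exact: lt_next.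
  exact: tr h (lt_next _).
exists chain => m n cmn; case: (ltngtP m n) => // /chain_lt; rewrite cmn => /irr [].
Qed.

(** * Well-ordered chains and cofinality *)

Section WellOrdered.
Variables (T : Type) (le : T -> T -> Prop).
Hypotheses (le_refl : forall x, le x x)
  (le_trans : forall x y z, le x y -> le y z -> le x z)
  (le_anti : forall x y, le x y -> le y x -> x = y).

Lemma slt_trans x y z : slt le x y -> slt le y z -> slt le x z.
Proof.
move=> [xy nxy] [yz _]; split; first exact: le_trans xy yz.
by move=> exz; subst z; apply: nxy; apply: le_anti xy yz.
Qed.

Lemma slt_le_trans x y z : slt le x y -> le y z -> slt le x z.
Proof.
move=> [xy nxy] yz; split; first exact: le_trans xy yz.
by move=> exz; subst z; apply: nxy; apply: le_anti xy yz.
Qed.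

Definition wellord (S : T -> Prop) :=
  forall A : T -> Prop, (forall x, A x -> S x) -> (exists x, A x) ->
    exists m, A m /\ forall a, A a -> le m a.

Variable S : T -> Prop.
Hypothesis Swo : wellord S.

Lemma wellord_total x y : S x -> S y -> le x y \/ le y x.
Proof.
move=> Sx Sy.
have [m [xym mmin]] : exists m, (m = x \/ m = y) /\ forall a, (a = x \/ a = y) -> le m a.
  by apply: Swo; [move=> z [->|->] | exists x; left].
by case: xym => exm; subst m; [left|right]; apply: mmin; [right|left].
Qed.

Lemma wellord_trichotomy x y : S x -> S y -> slt le x y \/ x = y \/ slt le y x.
Proof.
move=> Sx Sy; case: (EM (x = y)) => [->|nxy]; first by right; left.
by case: (wellord_total Sx Sy) => h; [left|right; right]; split=> // eyx; apply: nxy.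
Qed.

Lemma wellord_not_slt x y : S x -> S y -> ~ slt le x y -> le y x.
Proof.
by move=> Sx Sy nxy; case: (wellord_trichotomy Sx Sy) => [//|[->|[]//]].
Qed.

Lemma wellord_max_or_nomax : (exists2 m, S m & forall s, S s -> le s m) \/
  (forall x, S x -> exists y, S y /\ slt le x y).
Proof.
case: (EM (exists2 m, S m & forall s, S s -> le s m)) => [|nmax]; [by left|right].
move=> x Sx; apply: contrapT => nx; apply: nmax; exists x => // s Ss.
by apply: wellord_not_slt => // sx; apply: nx; exists s.
Qed.

Definition slt_in x y := [/\ S x, S y & slt le x y].

Lemma slt_in_wf : well_founded slt_in.
Proof.
move=> z; apply: contrapT => nz.
have [m [[Sm nm] mmin]] : exists m, (S m /\ ~ Acc slt_in m) /\
    forall a, S a /\ ~ Acc slt_in a -> le m a.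
  apply: Swo => [x []//|]; exists z; split=> //.
  by apply: contrapT => nSz; apply: nz; constructor => y [].
apply: nm; constructor => y [Sy _ [ym nym]]; apply: contrapT => ny.
by apply: nym; apply: le_anti ym (mmin _ _).
Qed.

Lemma slt_sig_wf (P : T -> Prop) : (forall x, P x -> S x) ->
  well_founded (fun a b : {x | P x} => slt le (sval a) (sval b)).
Proof.
move=> PS; apply: (@Inclusion.wf_incl _ _ (fun a b => slt_in (sval a) (sval b))).
  by move=> a b ab; split=> //; apply: PS; apply: svalP.
exact: Inverse_Image.wf_inverse_image slt_in_wf.
Qed.

Definition seg (y : option T) x := S x /\ if y is Some y' then slt le x y' else True.

Definition minof (P : T -> Prop) (d : T) : T :=
  if pselect (exists m, P m /\ forall a, P a -> le m a) is left h then sval (cid h) else d.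

Lemma minofP P d : (exists m, P m /\ forall a, P a -> le m a) ->
  P (minof P d) /\ forall a, P a -> le (minof P d) a.
Proof. by move=> h; rewrite /minof; case: pselect => [h'|//]; case: (cid h'). Qed.

Section Enumeration.
Variables (A : T -> Prop) (y0 : option T).
Hypotheses (AS : forall x, A x -> S x)
  (A_large : forall y, seg y0 y -> ~ card_le {x | A x} {x | seg (Some y) x}).

(* [incr_enum c] is the least element of [A] above all earlier values. *)
Definition incr_enum : T -> T :=
  Fix slt_in_wf (fun _ => T) (fun c rec =>
    minof (fun a => A a /\ forall c' (h : slt_in c' c), slt le (rec c' h) a) c).

Definition above c a := A a /\ forall c', slt_in c' c -> slt le (incr_enum c') a.

Definition incr_enum_least c := above c (incr_enum c) /\ forall a, above c a -> le (incr_enum c) a.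

Lemma incr_enum_eq c : incr_enum c = minof (above c) c.
Proof.
rewrite /incr_enum Fix_eq // => x f g fg; congr minof; apply/funext => a; apply/propext.
by split=> [[Aa fa]|[Aa ga]]; split=> // c' h; [rewrite -fg|rewrite fg].
Qed.

Lemma above_nonempty c : seg y0 c -> (forall c', slt_in c' c -> incr_enum_least c') ->
  exists a, above c a.
Proof.
move=> y0c IH; apply: contrapT => nabove; apply: (A_large y0c).
have below a : A a -> exists c', slt_in c' c /\ le a (incr_enum c').
  move=> Aa; apply: contrapT => nbelow; apply: nabove; exists a; split=> // c' c'c.
  apply: contrapT => nlt; apply: nbelow; exists c'; split=> //.
  by case: (IH _ c'c) => -[Aincr _] _; apply: wellord_not_slt nlt; apply: AS.
have least_below a : A a -> exists m, (slt_in m c /\ le a (incr_enum m)) /\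
    forall c', slt_in c' c /\ le a (incr_enum c') -> le m c'.
  by move=> Aa; apply: Swo => [x [[]]//|]; apply: below.
pose h (a : {x | A x}) := sval (cid (least_below _ (svalP a))).
have hP a : (slt_in (h a) c /\ le (sval a) (incr_enum (h a))) /\
    forall c', slt_in c' c /\ le (sval a) (incr_enum c') -> le (h a) c'.
  by rewrite /h; case: (cid _).
have a_h a : sval a = incr_enum (h a).
  have [[[Sh Sc hc] ah] hmin] := hP a; have [_ h_min] := IH _ (And3 Sh Sc hc).
  apply: le_anti ah (h_min _ _); split; first exact: svalP.
  move=> c'' [Sc'' _ c''h]; apply: contrapT => nlt.
  have c''c : slt_in c'' c by split=> //; apply: slt_trans c''h hc.
  have [Aincr _] := (IH _ c''c).1.
  have := hmin c'' (conj c''c (wellord_not_slt (AS Aincr) (AS (svalP a)) nlt)).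
  by case: c''h => c''h nc'' /(le_anti c''h).
have hseg a : seg (Some c) (h a) by have [[[Sh _ hc] _] _] := hP a.
exists (fun a => exist _ (h a) (hseg a)) => a b /(congr1 sval) /= hab.
by apply: sval_inj; rewrite a_h hab -a_h.
Qed.

Lemma incr_enum_spec c : seg y0 c -> incr_enum_least c.
Proof.
elim/(well_founded_ind slt_in_wf): c => c IH y0c.
have IH' c' : slt_in c' c -> incr_enum_least c'.
  move=> c'c; apply: IH => //; case: c'c y0c => Sc' _ c'c [_].
  by case: y0 => [y|] //= cy; split=> //; apply: slt_trans c'c cy.
rewrite /incr_enum_least incr_enum_eq; apply: minofP.
by apply: Swo => [x [/AS]//|]; apply: above_nonempty.
Qed.

Lemma card_seg_le : card_le {x | seg y0 x} {x | A x}.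
Proof.
exists (fun c => exist _ (incr_enum (sval c)) (incr_enum_spec (svalP c)).1.1).
move=> [c y0c] [d y0d] /(congr1 sval) /= cd; apply: sval_inj => /=.
have [Sc _] := y0c; have [Sd _] := y0d.
case: (wellord_trichotomy Sc Sd) => [lt|[//|lt]].
- by have [_ /(_ c (And3 Sc Sd lt)) []] := (incr_enum_spec y0d).1; rewrite cd.
- by have [_ /(_ d (And3 Sd Sc lt)) []] := (incr_enum_spec y0c).1; rewrite cd.
Qed.

End Enumeration.

Definition cofinal (X : T -> Prop) :=
  (forall x, X x -> S x) /\ (forall s, S s -> exists x, X x /\ le s x).

Lemma least_cofinal_seg : exists y0,
  (exists2 X, cofinal X & card_le {x | X x} {x | seg y0 x}) /\
  forall y, seg y0 y -> forall X, cofinal X -> ~ card_le {x | X x} {x | seg (Some y) x}.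
Proof.
pose small y := exists2 X, cofinal X & card_le {x | X x} {x | seg y x}.
case: (EM (exists y, S y /\ small (Some y))) => [ex|nex]; last first.
  exists None; split=> [|y [Sy _] X cofX XSy]; last by apply: nex; exists y; split=> //; exists X.
  exists S; first by split=> // s Ss; exists s.
  exact: card_le_sub.
have [m [[Sm small_m] mmin]] : exists m, (S m /\ small (Some m)) /\
    forall a, S a /\ small (Some a) -> le m a.
  by apply: Swo => // x [].
exists (Some m); split=> // y [Sy [ym nym]] X cofX XSy; apply: nym.
by apply: le_anti ym (mmin _ _); split=> //; exists X.
Qed.

Definition records (X : T -> Prop) (g : T -> T) x :=
  X x /\ forall x', X x' -> slt le (g x') (g x) -> slt le x' x.

Section Records.
Variables (X : T -> Prop) (g : T -> T).
Hypotheses (cofX : cofinal X) (gS : forall x, X x -> S (g x))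
  (ginj : forall x y, X x -> X y -> g x = g y -> x = y).

Lemma records_cofinal : cofinal (records X g).
Proof.
case: cofX => XS Xcof; split=> [x [/XS]//|s Ss].
have [m [[x1 [[Xx1 sx1] ->]] mmin]] : exists m, (exists x, (X x /\ le s x) /\ m = g x) /\
    forall a, (exists x, (X x /\ le s x) /\ a = g x) -> le m a.
  apply: Swo => [a [x [[Xx _] ->]]|]; first exact: gS.
  by have [x [Xx sx]] := Xcof s Ss; exists (g x), x.
exists x1; split=> //; split=> // x' Xx' [gx'x1 ngx'x1].
case: (EM (le s x')) => [sx'|nsx'].
  by case: ngx'x1; apply: le_anti gx'x1 (mmin _ _); exists x'.
apply: slt_le_trans sx1; apply: contrapT => nx's.
by apply: nsx'; apply: wellord_not_slt nx's; [apply: XS|].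
Qed.

Lemma records_mono z w : records X g z -> records X g w ->
  slt le w z -> slt le (g w) (g z).
Proof.
move=> [Xz _] [Xw wrec] [wz nwz].
case: (wellord_trichotomy (gS Xw) (gS Xz)) => [//|[/ginj eq|/(wrec _ Xz) [zw _]]].
  by case: nwz; apply: eq.
by case: nwz; apply: le_anti wz zw.
Qed.

End Records.

(* For the least segment onto which some cofinal subset injects, the records
   of such an injection are a cofinal subchain of cardinal order type. *)
Lemma cofinal_cardinal : (exists s, S s) -> (forall x, S x -> exists y, S y /\ slt le x y) ->
  exists2 Z : T -> Prop, cofinal Z &
  [/\ is_cardinal (fun a b : {x | Z x} => slt le (sval a) (sval b)),
      forall Dd, cofinal Dd -> card_le {x | Z x} {x | Dd x} &
      card_le nat {x | Z x}].
Proof.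
move=> [s0 Ss0] nomax.
have [y0 [[X cofX [g0 g0inj]] y0min]] := least_cofinal_seg.
pose g x := if pselect (X x) is left Xx then sval (g0 (exist _ x Xx)) else x.
have gseg x : X x -> seg y0 (g x).
  by rewrite /g; case: pselect => // Xx _; exact: svalP.
have ginj x y : X x -> X y -> g x = g y -> x = y.
  rewrite /g; case: pselect => // Xx; case: pselect => // Xy _ _.
  by move=> /sval_inj /g0inj /(congr1 sval).
have gS x : X x -> S (g x) by move=> /gseg [].
pose Z := records X g.
have [ZS Zcof] := records_cofinal cofX gS.
have Zmono := records_mono gS ginj.
exists Z; first exact: (conj ZS Zcof).
split.
- split=> [a [_]//|a b c|a b|w|w]; first exact: slt_trans.
  + case: (wellord_trichotomy (ZS _ (svalP a)) (ZS _ (svalP b))) => [ab|[/sval_inj ab|ba]].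
    * by left.
    * by right; left.
    * by right; right.
  + exact: slt_sig_wf.
  move=> [f finj]; apply: (y0min (g (sval w)) (gseg _ (svalP w).1) Z (conj ZS Zcof)).
  have fseg u : seg (Some (g (sval w))) (g (sval (sval (f u)))).
    have [Zfu fuw] := (svalP (sval (f u)), svalP (f u)).
    by split; [apply: gS; case: Zfu|apply: Zmono (svalP w) _ _].
  exists (fun u => exist _ _ (fseg u)) => u u' /(congr1 sval) /= /ginj.
  move=> /(_ (svalP (sval (f u))).1 (svalP (sval (f u'))).1) fuu'.
  by apply: finj; apply: sval_inj; apply: sval_inj.
- move=> Dd cofDd; apply: card_le_trans (card_seg_le cofDd.1 (fun y y0y => y0min y y0y Dd cofDd)).
  apply: card_le_trans (card_le_sub (fun x (Zx : Z x) => Zx.1)) _.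
  by exists g0.
apply: (@nat_inj_of_nomax _ (slt le)) => [a [_]//||//|z Zz]; first exact: slt_trans.
  by have [z [Zz _]] := Zcof _ Ss0; exists z.
have [y [Sy zy]] := nomax _ (ZS _ Zz); have [z' [Zz' yz']] := Zcof _ Sy.
by exists z'; split=> //; apply: slt_le_trans zy yz'.
Qed.

End WellOrdered.

Section Cofinality.
Variables (T : Type) (le : T -> T -> Prop).
Hypotheses (le_refl : forall x, le x x)
  (le_trans : forall x y z, le x y -> le y z -> le x z).

Lemma cofinal_trans (S Z : T -> Prop) : cofinal le S Z ->
  forall Dd, cofinal_in le Z Dd -> cofinal le S Dd.
Proof.
move=> [ZS Zcof] Dd [DdZ Ddcof]; split=> [x /DdZ /ZS //|s Ss].
have [z [Zz sz]] := Zcof s Ss; have [d Ddd zd] := Ddcof z Zz.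
by exists d; split=> //; apply: le_trans sz zd.
Qed.

Lemma cf_is_least_cofinal (S Z : T -> Prop) : cofinal le S Z ->
  (forall Dd, cofinal le S Dd -> card_le {x | Z x} {x | Dd x}) ->
  cf_is le Z {x | Z x}.
Proof.
move=> cofZ Zmin; split=> [|Dd /(cofinal_trans cofZ) /Zmin //].
exists Z; split; last by exists id; exists id.
by split=> // x Zx; exists x => //; apply: le_refl.
Qed.

End Cofinality.

Section ChainBounds.
Variables (T : Type) (le : T -> T -> Prop).
Hypotheses (le_refl : forall x, le x x)
  (le_trans : forall x y z, le x y -> le y z -> le x z)
  (le_anti : forall x y, le x y -> le y x -> x = y).

Lemma ub_of_card_below_t (J : Type) (S : T -> Prop) : card_below_t le J ->
  wellord le S -> (exists s, S s) -> card_le {x | S x} J -> exists u, forall s, S s -> le s u.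
Proof.
move=> below_t Swo neS SJ.
case: (wellord_max_or_nomax le_refl Swo) => [[m _ mmax]|nomax]; first by exists m.
have [Z [ZS Zcof] [Zcard _ Zinf]] := cofinal_cardinal le_refl le_trans le_anti Swo neS nomax.
apply: contrapT => nub.
apply: (below_t _ _ Zcard Zinf (card_le_trans (card_le_sub ZS) SJ)).
exists sval; split=> // [[u ub]]; apply: nub; exists u => s Ss.
by have [z [Zz sz]] := Zcof s Ss; apply: le_trans sz (ub (exist _ z Zz)).
Qed.

(* The two chains are replaced by cofinal subchains of cardinal order type;
   if no element lay between them, these would form a pre-cut. *)
Lemma interpolant_of_card_below_p (J : Type) (S1 S2 : T -> Prop) : card_below_p le J ->
  wellord le S1 -> (exists s, S1 s) -> card_le {x | S1 x} J ->
  wellord (fun x y => le y x) S2 -> (exists s, S2 s) -> card_le {x | S2 x} J ->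
  (forall a b, S1 a -> S2 b -> le a b) ->
  exists c, (forall a, S1 a -> le a c) /\ (forall b, S2 b -> le c b).
Proof.
move=> below_p S1wo neS1 S1J S2wo neS2 S2J S12.
case: (wellord_max_or_nomax le_refl S1wo) => [[m S1m mmax]|nomax1].
  by exists m; split=> // b; apply: S12.
case: (wellord_max_or_nomax le_refl S2wo) => [[m S2m mmin]|nomax2].
  by exists m; split=> // a S1a; apply: S12.
have ge_trans x y z : le y x -> le z y -> le z x by move=> yx zy; apply: le_trans zy yx.
have ge_anti x y : le y x -> le x y -> x = y by move=> yx xy; apply: le_anti.
have [Z1 [Z1S Z1cof] [Z1card Z1min Z1inf]] :=
  cofinal_cardinal le_refl le_trans le_anti S1wo neS1 nomax1.
have [Z2 [Z2S Z2cof] [Z2card Z2min Z2inf]] :=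
  cofinal_cardinal le_refl ge_trans ge_anti S2wo neS2 nomax2.
apply: contrapT => nc.
apply: (below_p _ _ _ _ Z1card Z2card Z1inf Z2inf).
  apply: card_le_sum; first exact: card_le_trans Z1inf (card_le_trans (card_le_sub Z1S) S1J).
    exact: card_le_trans (card_le_sub Z1S) S1J.
  exact: card_le_trans (card_le_sub Z2S) S2J.
exists Z1, Z2; split.
- move=> x y [Z1x|Z2x] [Z1y|Z2y].
  + exact: (wellord_total S1wo (Z1S _ Z1x) (Z1S _ Z1y)).
  + by left; apply: S12; [apply: Z1S|apply: Z2S].
  + by right; apply: S12; [apply: Z1S|apply: Z2S].
  + by case: (wellord_total S2wo (Z2S _ Z2x) (Z2S _ Z2y)); [right|left].
- move=> x y Z1x Z2y; split; first by apply: S12; [apply: Z1S|apply: Z2S].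
  move=> exy; subst y; have [x' [S1x' [xx' nxx']]] := nomax1 _ (Z1S _ Z1x).
  by apply: nxx'; apply: le_anti xx' (S12 _ _ S1x' (Z2S _ Z2y)).
- move=> [c [Z1c Z2c]]; apply: nc; exists c; split.
    by move=> a /Z1cof [z [Z1z az]]; apply: le_trans az (Z1c _ Z1z).1.
  by move=> b /Z2cof [z [Z2z bz]]; apply: le_trans (Z2c _ Z2z).1 bz.
- exact: (cf_is_least_cofinal le_refl le_trans (conj Z1S Z1cof) Z1min).
exact: (cf_is_least_cofinal le_refl ge_trans (conj Z2S Z2cof) Z2min).
Qed.

End ChainBounds.

(** * Well-orders and the reduced power of the tree *)

Definition strict_wo (K : Type) (lt : K -> K -> Prop) :=
  [/\ (forall a, ~ lt a a), (forall a b c, lt a b -> lt b c -> lt a c),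
      (forall a b, lt a b \/ a = b \/ lt b a) & well_founded lt].

Lemma strict_wo_min (K : Type) (lt : K -> K -> Prop) : strict_wo lt ->
  forall P : K -> Prop, (exists x, P x) -> exists m, P m /\ forall x, P x -> ~ lt x m.
Proof.
move=> [_ _ _ wf] P [x Px]; elim/(well_founded_ind wf): x Px => x IH Px.
case: (EM (exists y, P y /\ lt y x)) => [[y [Py yx]]|xmin]; first exact: IH yx Py.
by exists x; split=> // y Py yx; apply: xmin; exists y.
Qed.

Section MonotoneImage.
Variables (T : Type) (le : T -> T -> Prop) (K : Type) (lt : K -> K -> Prop).
Variables (M : K -> Prop) (F : K -> T).
Hypotheses (le_refl : forall x, le x x) (ltwo : strict_wo lt)
  (F_mono : forall m m', M m -> M m' -> lt m m' -> le (F m) (F m')).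

Definition image (P : T) := exists2 m, M m & P = F m.

Lemma image_wellord : wellord le image.
Proof.
move=> A Aim [a Aa].
have [m [[Mm AFm] mmin]] : exists m, (M m /\ A (F m)) /\ forall x, M x /\ A (F x) -> ~ lt x m.
  by apply: strict_wo_min => //; case: (Aim a Aa) => m Mm am; exists m; rewrite -am.
exists (F m); split=> // b Ab; have [m' Mm' eb] := Aim b Ab; subst b.
have [_ _ lt_total _] := ltwo.
case: (lt_total m m') => [mm'|[<-|m'm]]; [exact: F_mono Mm Mm' mm'|exact: le_refl|].
by case: (mmin m' (conj Mm' Ab)).
Qed.

Lemma card_image_le (J : Type) : card_le {m | M m} J -> card_le {P | image P} J.
Proof.
apply: card_le_trans.
exists (fun P : {P | image P} => let p := cid2 (svalP P) in exist M (s2val p) (s2valP p)).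
have FP (P : {P | image P}) : sval P = F (s2val (cid2 (svalP P))).
  by case: (cid2 (svalP P)).
by move=> P Q /(congr1 sval) /= PQ; apply: sval_inj; rewrite FP PQ -FP.
Qed.

End MonotoneImage.

Lemma exists_strict_wo (K : Type) : exists lt : K -> K -> Prop, strict_wo lt.
Proof.
have [R Rwo] := wochoice.well_ordering_principle {classic K}.
have Rmin (P : K -> Prop) : (exists x, P x) -> exists z, P z /\ forall x, P x -> R z x.
  move=> [x Px]; have [z [[/asboolP Pz zmin] _]] := Rwo [pred y : {classic K} | `[< P y >]]
    (ex_intro _ x (introT (asboolP _) Px)).
  by exists z; split=> // y Py; apply: zmin; apply/asboolP.
have Rchain : wochoice.wo_chain R predT := fun A _ => Rwo A.
have Rtot := wochoice.wo_chainW Rchain.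
have Ranti a b : R a b -> R b a -> a = b.
  by move=> ab ba; apply: (wochoice.wo_chain_antisymmetric Rchain) => //; rewrite ab ba.
have Rtrans a b c : R a b -> R b c -> R a c.
  move=> ab bc; have [z [abc zmin]] := Rmin (fun y => [\/ y = a, y = b | y = c]) (ex_intro _ a (Or31 _ _ (erefl a))).
  case: abc => ez; subst z; first by apply: zmin; apply: Or33.
    by rewrite (Ranti a b ab (zmin a (Or31 _ _ (erefl a)))).
  by rewrite -(Ranti b c bc (zmin b (Or32 _ _ (erefl b)))).
exists (fun a b => R a b /\ a <> b); split=> [a [_]//|a b c [ab nab] [bc nbc]|a b|].
- split; first exact: Rtrans ab bc.
  by move=> ac; subst c; apply: nab; apply: Ranti ab bc.
- case: (EM (a = b)) => [->|nab]; first by right; left.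
  by case/orP: (Rtot a b isT isT) => [ab|ba]; [left|right; right]; split=> // eba; apply: nab.
move=> z; apply: contrapT => nz.
have [m [nm mmin]] := Rmin (fun y => ~ Acc (fun a b => R a b /\ a <> b) y) (ex_intro _ z nz).
apply: nm; constructor => y [ym nym]; apply: contrapT => ny.
by apply: nym; apply: Ranti ym (mmin _ ny).
Qed.

Section Filter.
Variables (I : Type) (D : (I -> Prop) -> Prop).
Hypothesis hD : is_filter D.

Lemma filterT (A : I -> Prop) : (forall i, A i) -> D A.
Proof. by case: hD => DT DS _ Aall; apply: DS DT => i _; apply: Aall. Qed.

Lemma filterS (A B : I -> Prop) : (forall i, A i -> B i) -> D A -> D B.
Proof. by case: hD => _ DS _; apply: DS. Qed.

Lemma filterS2 (A B C : I -> Prop) : (forall i, A i -> B i -> C i) -> D A -> D B -> D C.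
Proof. by case: hD => _ DS DI ABC DA DB; apply: DS (DI _ _ DA DB) => i [/ABC]. Qed.

End Filter.

Section InitialSegments.
Variable L : Type.
Implicit Types s t u : list L.

Lemma init_seg_refl s : init_seg s s.
Proof. by exists [::]; rewrite cats0. Qed.

Lemma init_seg_trans s t u : init_seg s t -> init_seg t u -> init_seg s u.
Proof. by move=> [a ->] [b ->]; exists (a ++ b); rewrite catA. Qed.

Lemma init_seg_anti s t : init_seg s t -> init_seg t s -> s = t.
Proof.
move=> [a ->] [b /(congr1 size) /eqP]; rewrite !size_cat -addnA -{1}[size s]addn0.
by rewrite eqn_add2l eq_sym addn_eq0 => /andP [/eqP /size0nil -> _]; rewrite cats0.
Qed.

Lemma init_seg_take s n m : n <= m -> init_seg (take n s) (take m s).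
Proof. by move=> nm; exists (drop n (take m s)); rewrite -{1}(take_takel s nm) cat_take_drop. Qed.

Lemma init_seg_take_self s n : init_seg (take n s) s.
Proof. by exists (drop n s); rewrite cat_take_drop. Qed.

End InitialSegments.

Section ReducedTree.
Variables (I : Type) (D : (I -> Prop) -> Prop) (L : Type).
Hypothesis hD : is_filter D.
Implicit Types f g h : I -> list L.

Definition cls f : redtree D L := exist _ (Deq D f) (ex_intro _ f erefl).

Lemma cls_surj (P : redtree D L) : exists f, P = cls f.
Proof. by case: P => P [f e]; exists f; apply: sval_inj. Qed.

Lemma cls_eq f g : Deq D f g -> cls f = cls g.
Proof.
move=> fg; apply: sval_inj; apply/funext => h; apply/propext.
by split; apply: (filterS2 hD _ fg) => i ->.
Qed.

Lemma Deq_of_eq f g : Deq D f = Deq D g -> Deq D f g.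
Proof. by move=> ->; apply: (filterT hD). Qed.

Lemma redtree_leE f g : redtree_le (cls f) (cls g) <-> Dle D f g.
Proof.
split=> [[f' [g' [/= /Deq_of_eq ff' [/Deq_of_eq gg']]]]|]; last by exists f, g.
by apply: (filterS2 hD _ (filterS2 hD (fun i a b => conj a b) ff' gg')) => i [-> ->].
Qed.

Lemma Dle_refl f : Dle D f f.
Proof. by apply: (filterT hD) => i; apply: init_seg_refl. Qed.

Lemma Dle_trans f g h : Dle D f g -> Dle D g h -> Dle D f h.
Proof. by apply: (filterS2 hD) => i; apply: init_seg_trans. Qed.

Lemma redtree_le_refl (x : redtree D L) : redtree_le x x.
Proof. by case: (cls_surj x) => f ->; apply/redtree_leE/Dle_refl. Qed.

Lemma redtree_le_trans (x y z : redtree D L) : redtree_le x y -> redtree_le y z -> redtree_le x z.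
Proof.
case: (cls_surj x) (cls_surj y) (cls_surj z) => f -> [g ->] [h ->].
by move=> /redtree_leE fg /redtree_leE gh; apply/redtree_leE; apply: Dle_trans fg gh.
Qed.

Lemma redtree_le_anti (x y : redtree D L) : redtree_le x y -> redtree_le y x -> x = y.
Proof.
case: (cls_surj x) (cls_surj y) => f -> [g ->] /redtree_leE fg /redtree_leE gf.
by apply: cls_eq; apply: (filterS2 hD _ fg gf) => i; apply: init_seg_anti.
Qed.

Lemma Dle_ub_of_below_t (J K : Type) (lt : K -> K -> Prop) (M : K -> Prop)
    (f : K -> I -> list L) : card_below_t (@redtree_le I D L) J -> strict_wo lt ->
  (forall m m', M m -> M m' -> lt m m' -> Dle D (f m) (f m')) ->
  (exists m, M m) -> card_le {m | M m} J ->
  exists g, forall m, M m -> Dle D (f m) g.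
Proof.
move=> below_t ltwo f_mono [m0 Mm0] MJ.
have F_mono m m' : M m -> M m' -> lt m m' -> redtree_le (cls (f m)) (cls (f m')).
  by move=> Mm Mm' mm'; apply/redtree_leE; apply: f_mono.
have [u ub] := ub_of_card_below_t redtree_le_refl redtree_le_trans redtree_le_anti below_t
  (image_wellord redtree_le_refl ltwo F_mono) (ex_intro _ _ (ex_intro2 _ _ m0 Mm0 erefl))
  (card_image_le (fun m => cls (f m)) MJ).
case: (cls_surj u) => g eg; exists g => m Mm; apply/redtree_leE; rewrite -eg.
by apply: ub; exists m.
Qed.

Lemma Dle_interpolant_of_below_p (J K1 K2 : Type)
    (lt1 : K1 -> K1 -> Prop) (M1 : K1 -> Prop) (f1 : K1 -> I -> list L)
    (lt2 : K2 -> K2 -> Prop) (M2 : K2 -> Prop) (f2 : K2 -> I -> list L) :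
  card_below_p (@redtree_le I D L) J -> strict_wo lt1 -> strict_wo lt2 ->
  (forall m m', M1 m -> M1 m' -> lt1 m m' -> Dle D (f1 m) (f1 m')) ->
  (forall m m', M2 m -> M2 m' -> lt2 m m' -> Dle D (f2 m') (f2 m)) ->
  (exists m, M1 m) -> (exists m, M2 m) ->
  card_le {m | M1 m} J -> card_le {m | M2 m} J ->
  (forall m1 m2, M1 m1 -> M2 m2 -> Dle D (f1 m1) (f2 m2)) ->
  exists c, (forall m, M1 m -> Dle D (f1 m) c) /\ (forall m, M2 m -> Dle D c (f2 m)).
Proof.
move=> below_p lt1wo lt2wo f1_mono f2_mono [m1 M1m1] [m2 M2m2] M1J M2J f12.
have F1_mono m m' : M1 m -> M1 m' -> lt1 m m' -> redtree_le (cls (f1 m)) (cls (f1 m')).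
  by move=> Mm Mm' mm'; apply/redtree_leE; apply: f1_mono.
have F2_mono m m' : M2 m -> M2 m' -> lt2 m m' -> redtree_le (cls (f2 m')) (cls (f2 m)).
  by move=> Mm Mm' mm'; apply/redtree_leE; apply: f2_mono.
have [c [c1 c2]] := interpolant_of_card_below_p redtree_le_refl redtree_le_trans
  redtree_le_anti below_p
  (image_wellord redtree_le_refl lt1wo F1_mono) (ex_intro _ _ (ex_intro2 _ _ m1 M1m1 erefl))
  (card_image_le (fun m => cls (f1 m)) M1J)
  (image_wellord (le := fun x y => redtree_le y x) redtree_le_refl lt2wo F2_mono)
  (ex_intro _ _ (ex_intro2 _ _ m2 M2m2 erefl)) (card_image_le (fun m => cls (f2 m)) M2J)
  (fun a b '(ex_intro2 m Mm ea) '(ex_intro2 m' Mm' eb) =>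
     eq_ind_r (fun a => redtree_le a b) (eq_ind_r (fun b => redtree_le (cls (f1 m)) b)
       (proj2 (redtree_leE _ _) (f12 m m' Mm Mm')) eb) ea).
case: (cls_surj c) => g eg; exists g; split=> m Mm; apply/redtree_leE; rewrite -eg.
  by apply: c1; exists m.
by apply: c2; exists m.
Qed.

End ReducedTree.

(** * Transfinite constructions *)

Section Transfinite.
Variables (K X : Type) (lt : K -> K -> Prop) (leX : X -> X -> Prop).
Hypotheses (ltwo : strict_wo lt) (leX_refl : forall x, leX x x)
  (leX_trans : forall x y z, leX x y -> leX y z -> leX x z).
Variable Inv : (K -> Prop) -> X -> Prop.
Hypotheses (Inv0 : exists x, Inv (fun _ => False) x)
  (Inv_succ : forall A x k, (forall k', A k' <-> lt k' k) -> Inv A x ->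
     exists x', leX x x' /\ Inv (fun k' => A k' \/ k' = k) x')
  (Inv_lim : forall (M : K -> Prop) (f : K -> X), (exists m, M m) ->
     (forall m, M m -> exists m', M m' /\ lt m m') ->
     (forall m m', M m -> M m' -> lt m m' -> leX (f m) (f m')) ->
     (forall m, M m -> Inv (fun k => lt k m) (f m)) ->
     exists x, (forall m, M m -> leX (f m) x) /\ Inv (fun k => exists m, M m /\ lt k m) x).

Definition initial (A : K -> Prop) := forall a b, A b -> lt a b -> A a.

Lemma initial_lt (A : K -> Prop) : initial A -> (exists k, ~ A k) ->
  exists m, ~ A m /\ forall k, A k <-> lt k m.
Proof.
move=> Aini nA; have [m [nAm mmin]] := strict_wo_min ltwo nA.
exists m; split=> // k; split=> [Ak|km]; last by apply: contrapT => nAk; apply: mmin nAk km.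
case: ltwo => _ _ /(_ k m) [//|[ekm|mk]] _; first by subst k.
by case: nAm; apply: Aini Ak mk.
Qed.

Lemma Inv_ext (A B : K -> Prop) x : (forall k, A k <-> B k) -> Inv A x -> Inv B x.
Proof. by move=> AB; have -> : A = B by apply/funext => k; apply/propext. Qed.

Definition stage := {p : (K -> Prop) * X | initial p.1 /\ Inv p.1 p.2}.

Definition stage_lt (p q : stage) :=
  [/\ forall k, (sval p).1 k -> (sval q).1 k, exists k, (sval q).1 k /\ ~ (sval p).1 k
    & leX (sval p).2 (sval q).2].

Definition stage_le (p q : stage) := p = q \/ stage_lt p q.

Section Chain.
Variable C : stage -> Prop.
Hypothesis Ctot : forall s t, C s -> C t -> stage_le s t \/ stage_le t s.

Let U k := exists2 p, C p & (sval p).1 k.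

Lemma chain_stage_eq p q : C p -> C q -> (forall k, (sval p).1 k <-> (sval q).1 k) -> p = q.
Proof.
move=> Cp Cq pq; case: (Ctot Cp Cq) => [[//|[_ [k [qk npk]] _]]|[//|[_ [k [pk nqk]] _]]].
  by case: npk; apply/pq.
by case: nqk; apply/pq.
Qed.

(* Without a largest stage, the chain is a limit of the stages [{k | lt k m}]. *)
Lemma chain_limit_ub : (exists p, C p) ->
  (forall p, C p -> exists2 k, U k & ~ (sval p).1 k) ->
  exists t, forall s, C s -> stage_le s t.
Proof.
move=> [p1 Cp1] unbounded.
have stage_seg p : C p -> exists m, ~ (sval p).1 m /\ forall k, (sval p).1 k <-> lt k m.
  move=> Cp; apply: initial_lt; first by case: (svalP p).
  by have [k _ nk] := unbounded p Cp; exists k.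
pose M m := exists2 p, C p & forall k, (sval p).1 k <-> lt k m.
pose f m := if pselect (M m) is left h then (sval (s2val (cid2 h))).2 else (sval p1).2.
have fE m p : C p -> (forall k, (sval p).1 k <-> lt k m) -> f m = (sval p).2.
  move=> Cp pm; rewrite /f; case: pselect => [h|[]]; last by exists p.
  case: (cid2 h) => q Cq qm /=; congr (sval _).2; apply: chain_stage_eq => // k.
  by rewrite qm pm.
have [x [fx Invx]] : exists x, (forall m, M m -> leX (f m) x) /\
    Inv (fun k => exists m, M m /\ lt k m) x.
  apply: Inv_lim.
  - by have [m [_ pm]] := stage_seg p1 Cp1; exists m, p1.
  - move=> m [p Cp pm]; have [k [q Cq qk] npk] := unbounded p Cp.
    have [mq [nqm qmq]] := stage_seg q Cq.
    exists mq; split; first by exists q.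
    case: ltwo => _ lt_trans /(_ m mq) [//|[emq|mqm]] _.
      by subst mq; case: npk; apply/pm/qmq.
    by case: npk; apply/pm; apply: lt_trans mqm; apply/qmq.
  - move=> m m' [p Cp pm] [p' Cp' pm'] mm'; rewrite (fE _ _ Cp pm) (fE _ _ Cp' pm').
    case: (Ctot Cp Cp') => [[<-|[_ _ //]]|[<-|[p'p _ _]]]; try exact: leX_refl.
    by case: ltwo => irr _ _ _; case: (irr m); apply/pm; apply: p'p; apply/pm'.
  - move=> m [p Cp pm]; rewrite (fE _ _ Cp pm).
    by apply: Inv_ext (proj2 (svalP p)) => k; rewrite pm.
have UE k : U k <-> exists m, M m /\ lt k m.
  split=> [[p Cp pk]|[m [[p Cp pm] km]]]; last by exists p => //; apply/pm.
  by have [m [_ pm]] := stage_seg p Cp; exists m; split; [exists p|apply/pm].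
have Uini : initial U.
  by move=> a b [p Cp pb] ab; exists p => //; case: (svalP p) => pini _; apply: pini pb ab.
have InvU : Inv U x by apply: Inv_ext Invx => k; rewrite UE.
exists (exist _ (U, x) (conj Uini InvU)) => s Cs; right; split=> /=.
- by move=> k sk; exists s.
- by have [k Uk nk] := unbounded s Cs; exists k.
have [m [_ sm]] := stage_seg s Cs; rewrite -(fE m s Cs sm); apply: fx.
by exists s.
Qed.

End Chain.

Lemma transfinite_construction : exists x, Inv (fun _ => True) x.
Proof.
have [x0 Inv0x0] := Inv0.
have ini0 : initial (fun _ => False) by [].
pose s0 : stage := exist _ (_, x0) (conj ini0 Inv0x0).
have [[[A x] [Aini InvAx]] smax] : exists t, forall s, stage_le t s -> s = t.
  apply: Zorn_prop => [t|r s t|s t|C Ctot]; first by left.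
  - move=> rs st; case: rs st => [<- //|[rs1 [k [sk nrk]] rs2]] [<-|[st1 _ st2]].
      by right; split=> //; exists k.
    right; split=> [k' /rs1 /st1 //||]; last exact: leX_trans rs2 st2.
    by exists k; split=> //; apply: st1.
  - move=> [//|[_ [k [tk nsk]] _]] [<- //|[ts _ _]].
    by case: nsk; apply: ts.
  case: (EM (exists2 p, C p & forall k, (exists2 q, C q & (sval q).1 k) -> (sval p).1 k)).
    move=> [p Cp pmax]; exists p => q Cq; case: (Ctot _ _ Cq Cp) => // [[->|[_ [k [qk npk]] _]]].
      by left.
    by case: npk; apply: pmax; exists q.
  move=> nomax; case: (EM (exists p, C p)) => [neC|noC]; last first.
    by exists s0 => s Cs; case: noC; exists s.
  apply: chain_limit_ub => // p Cp; apply: contrapT => pmax; apply: nomax; exists p => // k Uk.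
  by apply: contrapT => npk; apply: pmax; exists k.
exists x; apply: (Inv_ext _ InvAx) => k; split=> // _; apply: contrapT => nAk.
have [m [nAm Am]] := initial_lt Aini (ex_intro _ k nAk).
have [x' [xx' Invx']] := Inv_succ Am InvAx.
have ini' : initial (fun k' => A k' \/ k' = m).
  by move=> a b [Ab|->] ab; left; [apply: Aini Ab ab|apply/Am].
have grown : stage_lt (exist _ (A, x) (conj Aini InvAx)) (exist _ (_, x') (conj ini' Invx')).
  by split=> /= [k' Ak'||//]; [left|exists m; split; [right|]].
move: (smax _ (or_intror grown)) => /(congr1 (fun p => (sval p).1 m)) /= eAm.
by apply: nAm; move: (or_intror (A m) (erefl m)); rewrite eAm.
Qed.

End Transfinite.

(** * Coding formulas by blocks *)

Lemma le_foldr_maxn (s : seq nat) x : x \in s -> x <= foldr maxn 0 s.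
Proof.
elim: s => [|y s IH] //=; rewrite inE => /orP [/eqP ->|/IH xs]; first exact: leq_maxl.
exact: leq_trans xs (leq_maxr _ _).
Qed.

Lemma map_eq_In (X Y : Type) (f g : X -> Y) (s : list X) y :
  List.In y s -> map f s = map g s -> f y = g y.
Proof. by elim: s => //= x s IH [<-|ys] [fgx fgs]; last exact: IH. Qed.

Section Formulas.
Variables (tau : vocab) (N : model tau).

Fixpoint term_bound (t : term tau) : nat :=
  match t with
  | tvar n => n.+1
  | tapp f a => foldr maxn 0 (map (fun i => term_bound (a i)) (enum 'I_(farity f)))
  end.

Definition atomic_bound (phi : atomic tau) : nat :=
  match phi with
  | aeq t1 t2 => maxn (term_bound t1) (term_bound t2)
  | arel r a => foldr maxn 0 (map (fun i => term_bound (a i)) (enum 'I_(rarity r)))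
  end.

Lemma teval_ext (v v' : nat -> N) t :
  (forall n, n < term_bound t -> v n = v' n) -> teval v t = teval v' t.
Proof.
elim: t => [n|f a IH] /= vv'; first exact: vv'.
congr finterp; apply/funext => i; apply: IH => n ni; apply: vv'.
by apply: leq_trans ni (le_foldr_maxn _); apply: map_f; rewrite mem_enum.
Qed.

Lemma aholds_ext (v v' : nat -> N) phi :
  (forall n, n < atomic_bound phi -> v n = v' n) -> aholds v phi = aholds v' phi.
Proof.
case: phi => [t1 t2|r a] /= vv'.
  have vv'1 n : n < term_bound t1 -> v n = v' n.
    by move=> nt; apply: vv'; apply: leq_trans nt (leq_maxl _ _).
  have vv'2 n : n < term_bound t2 -> v n = v' n.
    by move=> nt; apply: vv'; apply: leq_trans nt (leq_maxr _ _).
  by rewrite (teval_ext vv'1) (teval_ext vv'2).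
congr rinterp; apply/funext => i; apply: teval_ext => n ni; apply: vv'.
by apply: leq_trans ni (le_foldr_maxn _); apply: map_f; rewrite mem_enum.
Qed.

(* Terms are coded by tagged lists, using an injection of [list L] into [L]. *)
Lemma card_le_atomic (L : Type) : card_le nat L ->
  card_le (fun_sym tau) L -> card_le (rel_sym tau) L -> card_le (atomic tau) L.
Proof.
move=> natL [fL fLinj] [rL rLinj]; have [c cinj] := card_le_list_self natL.
case: natL => tag taginj; have tag01 : tag 0 <> tag 1 by move/taginj.
pose fix code t := match t with
  | tvar n => c [:: tag 0; tag n]
  | tapp f a => c (tag 1 :: fL f :: map (fun i => code (a i)) (enum 'I_(farity f)))
  end.
have codeinj : injective code.
  elim=> [n|f a IH] [n'|f' a'] /= /cinj; [by case=> /taginj ->|by case=> /tag01|by case=> /esym /tag01|].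
  case=> /fLinj ef; subst f' => /eq_in_map ea; congr tapp; apply/funext => i.
  by apply: IH; apply: ea; rewrite mem_enum.
exists (fun phi => match phi with
  | aeq t1 t2 => c [:: tag 0; code t1; code t2]
  | arel r a => c (tag 1 :: rL r :: map (fun i => code (a i)) (enum 'I_(rarity r)))
  end).
case=> [t1 t2|r a] [t1' t2'|r' a'] /cinj; [|by case=> /tag01|by case=> /esym /tag01|].
  by case=> /codeinj -> /codeinj ->.
case=> /rLinj er; subst r' => /eq_in_map ea; congr arel; apply/funext => i.
by apply: codeinj; apply: ea; rewrite mem_enum.
Qed.

Variables (I J : Type) (Phi : J -> pformula N I).

Definition sols (j : J) (i : I) (y : N) : Prop :=
  aholds (fun k => if k is k'.+1 then (Phi j).2 k' i else y) (Phi j).1.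

(* The code is the characteristic list of the solution set when [N] is
   finite, and the formula with its relevant parameters otherwise. *)
Lemma sols_coding (L : Type) : card_le (N + (fun_sym tau + rel_sym tau)) L ->
  forall y1 y2 : N, y1 <> y2 ->
  exists2 k, 0 < k & exists code : J -> I -> list L,
    (forall j i, size (code j i) = k) /\
    (forall j j' i, code j i = code j' i -> sols j i = sols j' i).
Proof.
move=> [g ginj] y1 y2 y12; have NL : card_le N L by exists (fun y => g (inl y)) => a b /ginj [].
case: (finite_or_infinite N) => [[ys ysN]|natN].
  have gy12 : g (inl y1) <> g (inl y2) by move/ginj => [].
  exists (size ys); first by case: ys ysN => [/(_ y1)//|].
  exists (fun j i => map (fun y => if pselect (sols j i y) then g (inl y1) else g (inl y2)) ys).
  split=> [j i|j j' i eji]; first by rewrite size_map.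
  apply/funext => y; apply/propext; move: (map_eq_In (ysN y) eji).
  case: pselect => s1; case: pselect => s2 e; by [split|case: gy12].
have natL := card_le_trans natN NL.
have funL : card_le (fun_sym tau) L by exists (fun f => g (inr (inl f))) => a b /ginj [].
have relL : card_le (rel_sym tau) L by exists (fun r => g (inr (inr r))) => a b /ginj [].
have [aL aLinj] := card_le_atomic natL funL relL.
have [c cinj] := card_le_list_self natL; have [nL nLinj] := NL.
exists 1 => //; exists (fun j i => [:: c (aL (Phi j).1 ::
  map (fun n => nL ((Phi j).2 n i)) (iota 0 (atomic_bound (Phi j).1)))]).
split=> // j j' i [/cinj [/aLinj ephi]]; rewrite -ephi => /eq_in_map eparams.
apply/funext => y; rewrite /sols -ephi; apply: aholds_ext => -[|n] //= nphi.
by apply: nLinj; apply: eparams; rewrite mem_iota leq0n add0n (ltnW nphi).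
Qed.

End Formulas.

Section Blocks.
Variables (I J L Y : Type) (P : J -> I -> Y -> Prop) (k : nat) (code : J -> I -> list L).
Hypotheses (k_gt0 : 0 < k) (size_code : forall j i, size (code j i) = k)
  (code_sound : forall j j' i, code j i = code j' i -> P j i = P j' i).
Implicit Types (s t u b : list L) (w : list J).

(* Blocks that are not codes impose no condition. *)
Definition decode i b : Y -> Prop :=
  if pselect (exists j, code j i = b) is left h then P (sval (cid h)) i else fun _ => True.

Lemma decode_code i j : decode i (code j i) = P j i.
Proof.
rewrite /decode; case: pselect => [h|[]]; last by exists j.
by case: (cid h) => j' /= /code_sound.
Qed.

Definition is_block s b := exists2 m, m.+1 * k <= size s & b = take k (drop (m * k) s).
Definition sat i s y := forall b, is_block s b -> decode i b y.
Definition consistent i s w := exists y, sat i s y /\ forall j, List.In j w -> P j i y.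
Definition aligned s := k %| size s.

Lemma block_cat s u m : m.+1 * k <= size s ->
  take k (drop (m * k) (s ++ u)) = take k (drop (m * k) s).
Proof.
move=> mks; have mk_lt : m * k < size s.
  by apply: leq_trans mks; rewrite mulSn -addn1 addnC leq_add2r.
rewrite drop_cat mk_lt takel_cat // size_drop.
by rewrite leq_subRL ?(ltnW mk_lt) // addnC -mulSn.
Qed.

Lemma is_block_prefix s t b : init_seg s t -> is_block s b -> is_block t b.
Proof.
move=> [u ->] [m mks ->]; exists m; last by rewrite block_cat.
by rewrite size_cat; apply: leq_trans mks (leq_addr _ _).
Qed.

Lemma sat_prefix i s t y : init_seg s t -> sat i t y -> sat i s y.
Proof. by move=> st ty b /(is_block_prefix st) /ty. Qed.

Lemma consistent_prefix i s t w : init_seg s t -> consistent i t w -> consistent i s w.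
Proof. by move=> st [y [ty wy]]; exists y; split=> //; apply: sat_prefix ty. Qed.

Lemma sat_nil i y : sat i [::] y.
Proof. by move=> b [m]; rewrite leqn0 muln_eq0 /= => /eqP k0; move: k_gt0; rewrite k0. Qed.

Lemma last_block s u m : aligned s -> size u = k ->
  m.+1 * k <= size s + k -> ~ m.+1 * k <= size s -> take k (drop (m * k) (s ++ u)) = u.
Proof.
move=> /divnK sk uk mks nmks.
have -> : m = size s %/ k.
  move: mks nmks; rewrite -sk; set q := size s %/ k => mks nmks.
  have mq : m.+1 <= q.+1 by rewrite -(leq_pmul2r k_gt0) [q.+1 * k]mulSn addnC.
  have qm : q < m.+1 by rewrite -(ltn_pmul2r k_gt0) ltnNge; apply/negP.
  by rewrite mulnK //; apply/eqP; rewrite eqn_leq; apply/andP; split; rewrite -ltnS.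
by rewrite sk drop_size_cat // -uk take_size.
Qed.

Lemma sat_cat i s j y : aligned s -> sat i s y -> P j i y -> sat i (s ++ code j i) y.
Proof.
move=> als sy Pjy b [m mks ->].
case: (boolP (m.+1 * k <= size s)) => [mks'|/negP nmks].
  by rewrite block_cat //; apply: sy; exists m.
rewrite (last_block als (size_code j i)) ?decode_code //.
by move: mks; rewrite size_cat size_code.
Qed.

Lemma sat_cat_code i s j y : aligned s -> sat i (s ++ code j i) y -> P j i y.
Proof.
move=> als sy; rewrite -decode_code; apply: sy; exists (size s %/ k).
  by rewrite mulSn size_cat size_code (divnK als) addnC.
by rewrite (divnK als) drop_size_cat // -(size_code j i) take_size.
Qed.

Lemma aligned_cat s j i : aligned s -> aligned (s ++ code j i).
Proof. by rewrite /aligned size_cat size_code => ks; rewrite dvdn_addr // dvdnn. Qed.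

Lemma aligned_nil : aligned [::].
Proof. exact: dvdn0. Qed.

Definition align_down s := take (size s %/ k * k) s.

Lemma align_down_prefix s : init_seg (align_down s) s.
Proof. exact: init_seg_take_self. Qed.

Lemma align_down_aligned s : aligned (align_down s).
Proof. by rewrite /aligned /align_down size_takel ?leq_divM // dvdn_mull. Qed.

Lemma align_down_max t s : aligned t -> init_seg t s -> init_seg t (align_down s).
Proof.
move=> alt [u su]; have -> : t = take (size t) s by rewrite su takel_cat // take_size.
apply: init_seg_take; rewrite -(divnK alt) leq_pmul2r // leq_div2r //.
by rewrite su size_cat leq_addr.
Qed.

Section Truncation.
Variables (i : I) (s : list L) (w : list J).

Definition consistent_upto q := consistent i (take (q * k) s) w.

Fixpoint largest_consistent n :=
  if n is n'.+1 then (if pselect (consistent_upto n) then n else largest_consistent n') else 0.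

Lemma largest_consistentP n : largest_consistent n <= n /\
  forall q, q <= n -> consistent_upto q ->
    q <= largest_consistent n /\ consistent_upto (largest_consistent n).
Proof.
elim: n => [|n [IH1 IH2]] /=; first by split=> // q; rewrite leqn0 => /eqP ->.
case: pselect => cn; first by split=> // q _ _; split.
split=> [|q]; first exact: leq_trans IH1 (leqnSn _).
by rewrite leq_eqVlt => /orP [/eqP -> //|]; apply: IH2.
Qed.

Definition truncate := take (largest_consistent (size s %/ k) * k) s.

Lemma truncate_prefix : init_seg truncate s.
Proof. exact: init_seg_take_self. Qed.

Lemma truncate_aligned : aligned truncate.
Proof.
rewrite /aligned /truncate size_takel ?dvdn_mull //.
have [le_n _] := largest_consistentP (size s %/ k).
by apply: leq_trans (leq_divM (size s) k); rewrite leq_pmul2r.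
Qed.

Lemma truncate_max t : aligned t -> init_seg t s -> consistent i t w -> init_seg t truncate.
Proof.
move=> alt [u su] ct.
have et : t = take (size t %/ k * k) s by rewrite (divnK alt) su takel_cat // take_size.
have tq : size t %/ k <= size s %/ k by apply: leq_div2r; rewrite su size_cat leq_addr.
have [_ /(_ _ tq) []] := largest_consistentP (size s %/ k); first by rewrite /consistent_upto -et.
by move=> tlc _; rewrite et; apply: init_seg_take; rewrite leq_pmul2r.
Qed.

Lemma truncate_consistent : consistent i [::] w -> consistent i truncate w.
Proof.
move=> c0; have [_ /(_ 0 (leq0n _))] := largest_consistentP (size s %/ k).
by rewrite /consistent_upto mul0n take0 => /(_ c0) [].
Qed.

End Truncation.

End Blocks.

(** * The construction *)

Section Construction.
Variables (I : Type) (D : (I -> Prop) -> Prop) (J L Y : Type).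
Variables (P : J -> I -> Y -> Prop) (k : nat) (code : J -> I -> list L).
Hypotheses (hD : is_filter D) (k_gt0 : 0 < k) (size_code : forall j i, size (code j i) = k)
  (code_sound : forall j j' i, code j i = code j' i -> P j i = P j' i)
  (hsmall : card_below_min_tp (@redtree_le I D L) J)
  (consistent0 : forall w, D (fun i => consistent P k code i [::] w)).

Definition admissible (f : I -> list L) :=
  (forall i, aligned k (f i)) /\ forall w, D (fun i => consistent P k code i (f i) w).

Definition forces j (f : I -> list L) :=
  D (fun i => forall y, sat P k code i (f i) y -> P j i y).

Lemma forces_mono j f g : Dle D f g -> forces j f -> forces j g.
Proof.
move=> fg; apply: (filterS2 hD _ fg) => i fgi fj y gy.
exact: fj (sat_prefix k_gt0 fgi gy).
Qed.

Section Limit.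
Variables (ltJ : J -> J -> Prop) (M : J -> Prop) (f : J -> I -> list L).
Hypotheses (ltJwo : strict_wo ltJ) (neM : exists m, M m)
  (nomaxM : forall m, M m -> exists m', M m' /\ ltJ m m')
  (f_mono : forall m m', M m -> M m' -> ltJ m m' -> Dle D (f m) (f m'))
  (f_adm : forall m, M m -> admissible (f m)).

Let f_al m : M m -> forall i, aligned k (f m i). Proof. by case/f_adm. Qed.

Definition above_consistent (B : list J -> Prop) (d : I -> list L) :=
  [/\ forall i, aligned k (d i), forall m, M m -> Dle D (f m) d &
      forall w, B w -> D (fun i => consistent P k code i (d i) w)].

Lemma above_consistent_align g : (forall m, M m -> Dle D (f m) g) ->
  above_consistent (fun _ => False) (fun i => align_down k (g i)).
Proof.
move=> fg; split=> // [i|m Mm]; first exact: align_down_aligned.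
by apply: (filterS hD _ (fg m Mm)) => i; exact: (align_down_max k_gt0 (f_al Mm i)).
Qed.

Lemma above_consistent_truncate B d w0 : above_consistent B d ->
  above_consistent (fun w => B w \/ w = w0) (fun i => truncate P k code i (d i) w0).
Proof.
move=> [d_al fd d_cons]; split=> [i|m Mm|w [Bw|->]]; first exact: truncate_aligned.
- have [_ /(_ w0) fm_cons] := f_adm Mm.
  apply: (filterS2 hD _ (fd m Mm) fm_cons) => i.
  exact: (truncate_max k_gt0 (f_al Mm i)).
- apply: (filterS hD _ (d_cons w Bw)) => i.
  exact: (consistent_prefix k_gt0 (truncate_prefix _ _ _ _ _ _)).
by apply: (filterS hD _ (consistent0 w0)) => i; apply: truncate_consistent.
Qed.

(* The truncations form a decreasing chain above the increasing chain [f];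
   [p] provides an element in between. *)
Lemma above_consistent_limit (ltW : list J -> list J -> Prop) (M2 : list J -> Prop)
    (dd : list J -> I -> list L) : strict_wo ltW -> card_le (list J) J -> (exists p, M2 p) ->
  (forall p p', M2 p -> M2 p' -> ltW p p' -> Dle D (dd p') (dd p)) ->
  (forall p, M2 p -> above_consistent (fun w => ltW w p) (dd p)) ->
  exists d, (forall p, M2 p -> Dle D d (dd p)) /\
    above_consistent (fun w => exists p, M2 p /\ ltW w p) d.
Proof.
move=> ltWwo WJ neM2 dd_mono dd_cons.
have [c [fc cdd]] := Dle_interpolant_of_below_p hD hsmall.2 ltJwo ltWwo f_mono dd_mono
  neM neM2 (card_le_sig M) (card_le_trans (card_le_sig M2) WJ)
  (fun m1 m2 Mm1 Mm2 => let: And3 _ fd _ := dd_cons m2 Mm2 in fd m1 Mm1).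
have cdd' p : M2 p -> Dle D (fun i => align_down k (c i)) (dd p).
  move=> M2p; apply: (Dle_trans hD _ (cdd p M2p)).
  by apply: (filterT hD) => i; apply: align_down_prefix.
exists (fun i => align_down k (c i)); split; first exact: cdd'.
split=> [i|m Mm|w [p [M2p wp]]]; first exact: align_down_aligned.
  by apply: (filterS hD _ (fc m Mm)) => i; apply: (align_down_max k_gt0 (f_al Mm i)).
have [_ _ /(_ w wp) dd_w] := dd_cons p M2p.
by apply: (filterS2 hD _ (cdd' p M2p) dd_w) => i; apply: (consistent_prefix k_gt0).
Qed.

Lemma admissible_above_chain g : (forall m, M m -> Dle D (f m) g) ->
  exists2 d, admissible d & forall m, M m -> Dle D (f m) d.
Proof.
move=> fg; have [ltW ltWwo] := exists_strict_wo (list J).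
have natJ : card_le nat J.
  apply: card_le_trans (card_le_sig M).
  by case: ltJwo => irr tr _ _; apply: nat_inj_of_nomax irr tr neM nomaxM.
have WJ : card_le (list J) J by apply: card_le_list natJ (card_le_refl J).
have ge_refl (d : I -> list L) : Dle D d d := Dle_refl hD d.
have ge_trans (d1 d2 d3 : I -> list L) : Dle D d2 d1 -> Dle D d3 d2 -> Dle D d3 d1.
  by move=> d21 d32; exact: (Dle_trans hD d32 d21).
have [d [d_al fd d_cons]] : exists d, above_consistent (fun _ => True) d.
  apply: (@transfinite_construction _ _ ltW (fun d d' => Dle D d' d) ltWwo ge_refl ge_trans
    above_consistent).
  - by exists (fun i => align_down k (g i)); apply: above_consistent_align.
  - move=> B d w0 _ d_cons; exists (fun i => truncate P k code i (d i) w0).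
    split; last exact: above_consistent_truncate.
    by apply: (filterT hD) => i; apply: truncate_prefix.
  by move=> M2 dd neM2 _ dd_mono dd_cons; apply: above_consistent_limit.
exists d; last exact: fd.
by split=> // w; apply: d_cons.
Qed.

End Limit.

Lemma admissible_forcing_all : exists2 f, admissible f & forall j, forces j f.
Proof.
have [ltJ ltJwo] := exists_strict_wo J.
pose Inv (A : J -> Prop) (f : I -> list L) := admissible f /\ forall j, A j -> forces j f.
have [f [f_adm f_forces]] : exists f, Inv (fun _ => True) f.
  have le_trans (f g h : I -> list L) : Dle D f g -> Dle D g h -> Dle D f h.
    exact: Dle_trans.
  apply: (@transfinite_construction _ _ ltJ (@Dle I D L) ltJwo (Dle_refl hD) le_trans Inv).
  - exists (fun _ => [::]); split=> [|j []].
    by split=> [i|]; [exact: aligned_nil|exact: consistent0].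
  - move=> A f j0 _ [[f_al f_cons] f_forces].
    pose f' i := if pselect (consistent P k code i (f i) [:: j0]) then f i ++ code j0 i else f i.
    have ff' : Dle D f f'.
      by apply: (filterT hD) => i; rewrite /f'; case: pselect => cj0; [exists (code j0 i)|apply: init_seg_refl].
    exists f'; split=> //; split; first split.
    + move=> i; rewrite /f'; case: pselect => cj0; last exact: f_al.
      exact: (aligned_cat size_code _ _ (f_al i)).
    + move=> w; apply: (filterS hD _ (f_cons (j0 :: w))) => i [y [fy wy]].
      rewrite /f'; case: pselect => [cj0|[]]; last by exists y; split=> // j [<-|[]]; apply: wy; left.
      exists y; split; first exact: (sat_cat k_gt0 size_code code_sound (f_al i) fy (wy j0 (or_introl erefl))).
      by move=> j wj; apply: wy; right.
    move=> j [Aj|->]; first exact: (forces_mono ff' (f_forces j Aj)).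
    apply: (filterS hD _ (f_cons [:: j0])) => i j0_cons y.
    rewrite /f'; case: pselect => // cj0; exact: (sat_cat_code size_code code_sound (f_al i)).
  move=> M fM neM nomaxM fM_mono fM_Inv.
  have [g fg] := Dle_ub_of_below_t hD hsmall.1 ltJwo fM_mono neM (card_le_sig M).
  have [d d_adm fd] := admissible_above_chain ltJwo neM nomaxM fM_mono
    (fun m Mm => (fM_Inv m Mm).1) fg.
  exists d; split; first exact: fd.
  split=> // j [m [Mm jm]].
  exact: (forces_mono (fd m Mm) ((fM_Inv m Mm).2 j jm)).
by exists f => // j; apply: f_forces.
Qed.

End Construction.

Lemma filter_Forall (I J : Type) (D : (I -> Prop) -> Prop) (Q : J -> I -> Prop) (w : list J) :
  is_filter D -> (forall j, List.In j w -> D (Q j)) ->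
  D (fun i => forall j, List.In j w -> Q j i).
Proof.
move=> hD; elim: w => [|j w IH] Qw; first by apply: (filterT hD) => i j [].
apply: (filterS2 hD _ (Qw j (or_introl erefl)) (IH (fun j' wj' => Qw j' (or_intror wj')))).
by move=> i Qj Qw' j' [<-|/Qw'].
Qed.

Unset Implicit Arguments.

Theorem mainTheorem3
    (I : Type) (D : (I -> Prop) -> Prop) (hD : is_filter D)
    (tau : vocab) (N : model tau)
    (* L stands for the set of ordinals < lambda = ||N|| + |tau_N| *)
    (L : Type) (hL : card_eq L (carrier N + (fun_sym tau + rel_sym tau))%type)
    (J : Type) (Phi : J -> pformula N I)
    (hsmall : card_below_min_tp (@redtree_le I D L) J)
    (hfin : forall l : list J,
        exists x : I -> N, forall j, List.In j l -> realizes D x (Phi j)) :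
  exists x : I -> N, forall j, realizes D x (Phi j).
Proof.
case: (EM (exists y1 y2 : N, y1 <> y2)) => [[y1 [y2 y12]]|N_trivial]; last first.
  have [x _] := hfin [::]; exists x => j; have [xj xjj] := hfin [:: j].
  have -> : x = xj.
    by apply/funext => i; apply: contrapT => ne; apply: N_trivial; exists (x i), (xj i).
  exact: xjj (or_introl erefl).
have [k k_gt0 [code [size_code code_sound]]] :=
  sols_coding Phi (card_eq_le (card_eq_sym hL)) y12.
have consistent0 w : D (fun i => consistent (sols Phi) k code i [::] w).
  have [x xw] := hfin w; apply: (filterS hD _ (filter_Forall hD xw)) => i xwi.
  by exists (x i); split; [apply: sat_nil|].
have [f [_ f_cons] f_forces] :=
  admissible_forcing_all hD k_gt0 size_code code_sound hsmall consistent0.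
pose x i := if pselect (exists y, sat (sols Phi) k code i (f i) y) is left h then sval (cid h) else y1.
exists x => j; apply: (filterS2 hD _ (f_cons [::]) (f_forces j)) => i [y [fy _]] fj.
by apply: fj; rewrite /x; case: pselect => [h|[]]; [case: (cid h)|exists y].
Qed.
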